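(* Let $S$ be a $0$-left cancellative semigroup and let $\sigma$ be a maximal string in $S$. Then either $\sigma$ is open, or $\sigma=\delta_r=\{t\in S:t\mid r\}$ for some $r\in S$ with $rS=\{0\}$.
   Context: $S$ has zero $0$; $0$-left cancellative: $st=sr\neq0\Rightarrow t=r$. $\tilde S=S\cup\{1\}$, $1$ an adjoined identity; $s\mid t$ means $t\in s\tilde S$. A string is a nonempty $\sigma\subseteq S$ with $0\notin\sigma$, closed under divisors ($s\mid t\in\sigma\Rightarrow s\in\sigma$), and such that any $s_1,s_2\in\sigma$ have a common multiple $s\in\sigma$ ($s_1\mid s$, $s_2\mid s$). Maximal: not properly contained in another string. The interior of a string $\sigma$ is $\{s\in S:\exists p\in S,\ sp\in\sigma\}$; $\sigma$ is open if it equals its interior. *)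

Record zsemigroup := ZSemigroup {
  carrier :> Type;
  mul : carrier -> carrier -> carrier;
  zero : carrier;
  mulA : forall a b c, mul a (mul b c) = mul (mul a b) c;
  mul0s : forall s, mul zero s = zero;
  muls0 : forall s, mul s zero = zero
}.

Arguments mul {_} _ _.
Arguments zero {_}.

Section Defs.
Variable S : zsemigroup.

Definition zero_left_cancellative : Prop :=
  forall s t r : S, mul s t = mul s r -> mul s t <> zero -> t = r.

(* s | t  iff  t in s * S~ (S~ = S with an adjoined identity) *)
Definition divides (s t : S) : Prop := t = s \/ exists u : S, t = mul s u.

Definition is_string (sigma : S -> Prop) : Prop :=
  (exists s, sigma s) /\
  ~ sigma zero /\
  (forall s t, divides s t -> sigma t -> sigma s) /\
  (forall s1 s2, sigma s1 -> sigma s2 ->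
     exists s, sigma s /\ divides s1 s /\ divides s2 s).

Definition is_maximal_string (sigma : S -> Prop) : Prop :=
  is_string sigma /\
  forall tau : S -> Prop, is_string tau ->
    (forall s, sigma s -> tau s) -> (forall s, tau s -> sigma s).

Definition interior (sigma : S -> Prop) (s : S) : Prop :=
  exists p : S, sigma (mul s p).

Definition is_open (sigma : S -> Prop) : Prop :=
  forall s, sigma s <-> interior sigma s.

Definition delta (r : S) (t : S) : Prop := divides t r.

End Defs.

(* Either every element s of the maximal string sigma has a multiple s p in sigma (then sigma is
   open), or some r in sigma has none.  In the latter case a common multiple in sigma of r and
   any t in sigma can only be r itself, so sigma = delta_r.  If some r s were nonzero, delta_(r s)
   would be a string containing delta_r and the element r s outside sigma, contradicting
   maximality. *)

From Stdlib Require Import Classical.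

Section Strings.
Variable S : zsemigroup.

Lemma divides_refl (s : S) : divides S s s.
Proof. now left. Qed.

Lemma divides_mulr (s p : S) : divides S s (mul s p).
Proof. right; now exists p. Qed.

Lemma divides_trans (a b c : S) : divides S a b -> divides S b c -> divides S a c.
Proof.
  intros [-> | [u ->]] [-> | [v ->]]; auto using divides_refl, divides_mulr.
  right; exists (mul u v); now rewrite mulA.
Qed.

Lemma zero_divides_eq0 (r : S) : divides S zero r -> r = zero.
Proof. intros [-> | [u ->]]; [reflexivity | apply mul0s]. Qed.

Lemma delta_string (r : S) : r <> zero -> is_string S (delta S r).
Proof.
  intros Hr; unfold delta; repeat split.
  - exists r; apply divides_refl.
  - now intros H0%zero_divides_eq0.
  - intros a b Hab Hb; exact (divides_trans a b r Hab Hb).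
  - intros s1 s2 H1 H2; exists r; auto using divides_refl.
Qed.

Lemma string_interior_sub (sigma : S -> Prop) :
  is_string S sigma -> forall s, interior S sigma s -> sigma s.
Proof.
  intros (_ & _ & Hdiv & _) s [p Hp]; exact (Hdiv s _ (divides_mulr s p) Hp).
Qed.

Lemma string_eq_delta (sigma : S -> Prop) (r : S) :
  is_string S sigma -> sigma r -> ~ interior S sigma r ->
  forall t, sigma t <-> delta S r t.
Proof.
  intros Hstr Hr Hnint t; destruct Hstr as (_ & _ & Hdiv & Hcm); split.
  - intros Ht; destruct (Hcm t r Ht Hr) as (s & Hs & Hts & [-> | [u ->]]).
    + exact Hts.
    + exfalso; apply Hnint; now exists u.
  - intros Hd; exact (Hdiv t r Hd Hr).
Qed.

Lemma maximal_string_annihilates (sigma : S -> Prop) (r : S) :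
  is_maximal_string S sigma -> sigma r -> ~ interior S sigma r ->
  forall s, mul r s = zero.
Proof.
  intros [Hstr Hmax] Hr Hnint s; apply NNPP; intros Hrs.
  pose proof (string_eq_delta sigma r Hstr Hr Hnint) as Hdelta.
  assert (Hsub : forall t, sigma t -> delta S (mul r s) t).
  { intros t Ht%Hdelta; exact (divides_trans t r _ Ht (divides_mulr r s)). }
  apply Hnint; exists s.
  exact (Hmax _ (delta_string _ Hrs) Hsub _ (divides_refl _)).
Qed.

End Strings.

Theorem proposition11p3 (S : zsemigroup) (sigma : S -> Prop) :
  zero_left_cancellative S ->
  is_maximal_string S sigma ->
  is_open S sigma \/
  exists r : S,
    (forall t : S, sigma t <-> delta S r t) /\
    (forall s : S, mul r s = zero).
Proof.
  intros _ Hmax.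
  destruct (classic (forall s, sigma s -> interior S sigma s)) as [Hint | Hnint].
  - left; intros s; split; [apply Hint |].
    apply (string_interior_sub S), Hmax.
  - right; apply not_all_ex_not in Hnint as [r Hr].
    apply imply_to_and in Hr as [Hr Hnint].
    exists r; split.
    + exact (string_eq_delta S sigma r (proj1 Hmax) Hr Hnint).
    + exact (maximal_string_annihilates S sigma r Hmax Hr Hnint).
Qed.
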